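(* Let $X=\mathbb{R}^2$, $A=\mathbb{R}\times\{0\}$ and $B=\operatorname{epi}(|\cdot|+1)=\{(s,t)\in\mathbb{R}^2: t\ge |s|+1\}$, and let $T:=\mathrm{Id}-P_A+P_BR_A$. Then $A\cap B=\varnothing$, and for every starting point $x\in[-1,1]\times\{0\}$ and every $n\in\{1,2,\ldots\}$ one has $T^n x=(0,n)\in B$; in particular $\|P_BT^nx\|=n\to\infty$, so $(P_BT^nx)_{n}$ is unbounded.
   Context: $P_C$ is the Euclidean projection onto a closed convex set $C$, and $R_C=2P_C-\mathrm{Id}$. *)

From Stdlib Require Import Reals.
Open Scope R_scope.

Definition R2 : Type := (R * R)%type.

Definition vadd (u v : R2) : R2 := (fst u + fst v, snd u + snd v).
Definition vsub (u v : R2) : R2 := (fst u - fst v, snd u - snd v).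
Definition vscal (a : R) (u : R2) : R2 := (a * fst u, a * snd u).

Definition norm2 (u : R2) : R := sqrt (fst u ^ 2 + snd u ^ 2).

Definition is_proj (C : R2 -> Prop) (x p : R2) : Prop :=
  C p /\ forall c, C c -> norm2 (vsub x p) <= norm2 (vsub x c).

Definition is_proj_map (C : R2 -> Prop) (P : R2 -> R2) : Prop :=
  forall x, is_proj C x (P x).

Definition refl (P : R2 -> R2) (x : R2) : R2 := vsub (vscal 2 (P x)) x.

Definition setA (u : R2) : Prop := snd u = 0.
Definition setB (u : R2) : Prop := snd u >= Rabs (fst u) + 1.

Definition Top (PA PB : R2 -> R2) (x : R2) : R2 :=
  vadd (vsub x (PA x)) (PB (refl PA x)).

Fixpoint iterate (f : R2 -> R2) (n : nat) (x : R2) : R2 :=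
  match n with
  | O => x
  | S k => f (iterate f k x)
  end.

(* Since A is the horizontal axis, R_A x = (x1, -x2) and x - P_A x = (0, x2), so
   T x = (0, x2) + P_B (x1, -x2).  Whenever |x1| <= 1 + x2, the point (x1, -x2)
   lies in the normal cone of B at its apex (0, 1), hence P_B (x1, -x2) = (0, 1)
   and T x = (0, x2 + 1).  Starting from (a, 0) with |a| <= 1 the orbit therefore
   climbs the vertical axis one unit per step, staying inside B. *)

From Stdlib Require Import Reals Lra Psatz.
Open Scope R_scope.

Lemma norm2_le_sqr (u v : R2) :
  norm2 u <= norm2 v -> fst u ^ 2 + snd u ^ 2 <= fst v ^ 2 + snd v ^ 2.
Proof. unfold norm2; intro H; apply sqrt_le_0; nra. Qed.

Lemma norm2_vertical (t : R) : 0 <= t -> norm2 (0, t) = t.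
Proof.
  intro Ht; unfold norm2; cbn [fst snd].
  replace (0 ^ 2 + t ^ 2) with (t ^ 2) by ring.
  exact (sqrt_pow2 t Ht).
Qed.

Lemma is_proj_id (C : R2 -> Prop) (x p : R2) : C x -> is_proj C x p -> p = x.
Proof.
  intros Cx [_ Hmin]; specialize (Hmin x Cx); apply norm2_le_sqr in Hmin.
  destruct x as [x1 x2], p as [p1 p2]; cbn [vsub fst snd] in Hmin.
  pose proof (pow2_ge_0 (x1 - p1)); pose proof (pow2_ge_0 (x2 - p2)).
  assert (p1 = x1) by nra; assert (p2 = x2) by nra; subst; reflexivity.
Qed.

Lemma is_proj_setA (y p : R2) : is_proj setA y p -> p = (fst y, 0).
Proof.
  intros [Ap Hmin]; specialize (Hmin (fst y, 0) eq_refl); apply norm2_le_sqr in Hmin.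
  destruct y as [y1 y2], p as [p1 p2]; unfold setA in Ap; cbn [vsub fst snd] in *.
  subst p2; f_equal; nra.
Qed.

Lemma setA_setB_disjoint (u : R2) : ~ (setA u /\ setB u).
Proof.
  intros [Au Bu]; unfold setA, setB in *; pose proof (Rabs_pos (fst u)); lra.
Qed.

Lemma setB_vertical (t : R) : 1 <= t -> setB (0, t).
Proof. intro Ht; unfold setB; cbn [fst snd]; rewrite Rabs_R0; lra. Qed.

(* The hypothesis places (a, b) in the normal cone (0, 1) + {(s, t) : t <= -|s|}
   of B at its apex. *)
Lemma is_proj_setB_apex (a b : R) (p : R2) :
  Rabs a <= 1 - b -> is_proj setB (a, b) p -> p = (0, 1).
Proof.
  intros Hab [Bp Hmin].
  specialize (Hmin (0, 1) (setB_vertical 1 (Rle_refl 1))); apply norm2_le_sqr in Hmin.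
  destruct p as [p1 p2]; unfold setB in Bp; cbn [vsub fst snd] in *.
  revert Bp Hab; unfold Rabs; destruct (Rcase_abs p1), (Rcase_abs a); intros;
    f_equal; nra.
Qed.

Section DouglasRachford.

Variables PA PB : R2 -> R2.
Hypothesis hPA : is_proj_map setA PA.
Hypothesis hPB : is_proj_map setB PB.

Lemma Top_climb (a t : R) : Rabs a <= 1 + t -> Top PA PB (a, t) = (0, t + 1).
Proof.
  intro Ha.
  assert (HPA : PA (a, t) = (a, 0)) by exact (is_proj_setA _ _ (hPA (a, t))).
  assert (HRA : refl PA (a, t) = (a, - t)).
  { unfold refl, vscal, vsub; rewrite HPA; cbn [fst snd]; f_equal; ring. }
  assert (HPB : PB (a, - t) = (0, 1)).
  { apply (is_proj_setB_apex a (- t)); [lra | apply hPB]. }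
  unfold Top; rewrite HRA, HPB, HPA; unfold vadd, vsub; cbn [fst snd]; f_equal; ring.
Qed.

Lemma iterate_Top_climb (a : R) (n : nat) :
  Rabs a <= 1 -> iterate (Top PA PB) (S n) (a, 0) = (0, INR (S n)).
Proof.
  intro Ha; induction n as [|n IH]; cbn [iterate].
  - rewrite Top_climb by lra; f_equal; cbn; ring.
  - cbn [iterate] in IH; rewrite IH, Top_climb, (S_INR (S n)); [reflexivity |].
    rewrite Rabs_R0; pose proof (pos_INR (S n)); lra.
Qed.

End DouglasRachford.

Theorem mainTheorem3 (PA PB : R2 -> R2)
  (hPA : is_proj_map setA PA) (hPB : is_proj_map setB PB) :
  (forall u : R2, ~ (setA u /\ setB u)) /\
  (forall (x : R2), -1 <= fst x <= 1 -> snd x = 0 ->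
     (forall n : nat, (1 <= n)%nat ->
        iterate (Top PA PB) n x = (0, INR n) /\
        setB (iterate (Top PA PB) n x) /\
        norm2 (PB (iterate (Top PA PB) n x)) = INR n) /\
     (forall M : R, exists n : nat,
        M < norm2 (PB (iterate (Top PA PB) n x)))).
Proof.
  split; [exact setA_setB_disjoint |].
  intros [a x2] Ha Hx2; cbn [fst snd] in Ha, Hx2; subst x2.
  assert (Ha' : Rabs a <= 1) by (apply Rabs_le; exact Ha).
  assert (Horbit : forall n : nat, (1 <= n)%nat ->
    iterate (Top PA PB) n (a, 0) = (0, INR n) /\
    setB (iterate (Top PA PB) n (a, 0)) /\
    norm2 (PB (iterate (Top PA PB) n (a, 0))) = INR n).
  { intros [|n] Hn; [inversion Hn |].
    assert (Hn1 : 1 <= INR (S n)) by (apply (le_INR 1); exact Hn).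
    rewrite (iterate_Top_climb PA PB hPA hPB a n Ha').
    split; [reflexivity | split; [exact (setB_vertical _ Hn1) |]].
    rewrite (is_proj_id setB _ _ (setB_vertical _ Hn1) (hPB _)).
    apply norm2_vertical; lra. }
  split; [exact Horbit |].
  intro M; destruct (INR_unbounded M) as [n Hn]; exists (S n).
  destruct (Horbit (S n)) as [_ [_ ->]]; [lia | rewrite S_INR; lra].
Qed.
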